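(* Under the standing setup and Assumptions 1 and 2 below (and the standing restriction on $\mathcal{B}$), there exists a matrix $\nu^*\in\mathbb{R}_+^{m\times m}$ with nonnegative entries such that the access policy $\alpha^*=(\alpha_1^*,\dots,\alpha_m^* )\in\mathcal{A}$ defined for each $i=1,\dots,m$ and each $h_i\in\mathbb{R}_+$ by $$\alpha_i^*(h_i)=\begin{cases}1 & \text{if } \nu^*_{ii}\,q(h_i)\ \ge\ p_i+\sum_{j\neq i}\nu^*_{ji}\,q_{ij},\\ 0 & \text{otherwise},\end{cases}$$ is an optimal solution of the random access design problem (P).
   Context: Standing setup: $m\ge 1$ sensors indexed by $i$. For each $i$, the channel state $h_i$ is a random variable on $\mathbb{R}_+$ with distribution $\phi_i$, and $h_1,\dots,h_m$ are mutually independent. The function $q:\mathbb{R}_+\to[0,1]$ is continuous and strictly increasing. Constants: collision probabilities $q_{ji}\in[0,1]$ for $j\neq i$, transmit powers $p_i>0$, required success rates $c_i\in(0,1]$. An access policy for sensor $i$ is a measurable function $\alpha_i:\mathbb{R}_+\to[0,1]$; $\mathcal{A}_i$ is the set of all such functions and $\mathcal{A}=\mathcal{A}_1\times\cdots\times\mathcal{A}_m$. Problem (P): $$\min_{\alpha\in\mathcal{A}}\ \sum_{i=1}^m p_i\,\mathbb{E}_{h_i}[\alpha_i(h_i)]\quad\text{s.t.}\quad c_i\le \mathbb{E}_{h_i}[\alpha_i(h_i)q(h_i)]\prod_{j\ne i}\big(1-\mathbb{E}_{h_j}[\alpha_j(h_j)]\,q_{ji}\big),\ i=1,\dots,m.$$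 Assumption 1: each $\phi_i$ is non-atomic (continuous distribution function). Assumption 2 (strict feasibility): there exists $\alpha'\in\mathcal{A}$ satisfying all constraints of (P) with strict inequality. Standing restriction: there are constants $0<\beta_{\min}<\beta_{\max}<1$, with $\mathcal{B}=[\beta_{\min},\beta_{\max}]$, such that restricting (P) to policies with $\mathbb{E}_{h_i}[\alpha_i(h_i)q(h_i)]\in\mathcal{B}$ and $\mathbb{E}_{h_j}[\alpha_j(h_j)]q_{ji}\in\mathcal{B}$ for all $i,j$, $j\ne i$, does not change the feasible set of (P). *)

From HB Require Import structures.
From mathcomp Require Import all_boot all_order all_algebra.
From mathcomp Require Import all_classical all_reals all_analysis.
Set Implicit Arguments. Unset Strict Implicit. Unset Printing Implicit Defensive.
Import Order.TTheory GRing.Theory Num.Theory.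
Local Open Scope classical_set_scope.
Local Open Scope ring_scope.

Section Defs.
Variable R : realType.

Definition Rplus : set R := `[0, +oo[%classic.

Definition expect (phi : probability R R) (f : R -> R) : R :=
  Rintegral phi Rplus f.

Definition is_policy (a : R -> R) : Prop :=
  measurable_fun Rplus a /\ forall h, Rplus h -> 0 <= a h <= 1.

Variables (m : nat) (phi : 'I_m -> probability R R) (q : R -> R)
  (qc : 'I_m -> 'I_m -> R) (p c : 'I_m -> R).

Definition success_rate (alpha : 'I_m -> R -> R) (i : 'I_m) : R :=
  expect (phi i) (fun h => alpha i h * q h) *
  \prod_(j < m | j != i) (1 - expect (phi j) (alpha j) * qc j i).

Definition feasibleP (alpha : 'I_m -> R -> R) : Prop :=
  (forall i, is_policy (alpha i)) /\ forall i, c i <= success_rate alpha i.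

Definition strictly_feasibleP (alpha : 'I_m -> R -> R) : Prop :=
  (forall i, is_policy (alpha i)) /\ forall i, c i < success_rate alpha i.

Definition objectiveP (alpha : 'I_m -> R -> R) : R :=
  \sum_(i < m) p i * expect (phi i) (alpha i).

Definition optimalP (alpha : 'I_m -> R -> R) : Prop :=
  feasibleP alpha /\ forall beta, feasibleP beta -> objectiveP alpha <= objectiveP beta.

Definition threshold_policy (nu : 'M[R]_m) (i : 'I_m) (h : R) : R :=
  if p i + \sum_(j < m | j != i) nu j i * qc i j <= nu i i * q h then 1 else 0.

End Defs.

From HB Require Import structures.
From mathcomp Require Import all_boot all_order all_algebra.
From mathcomp Require Import all_classical all_reals all_analysis.
From mathcomp Require Import measurable_realfun.
From mathcomp Require Import lra.
Import Order.TTheory GRing.Theory Num.Theory numFieldNormedType.Exports.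
Local Open Scope classical_set_scope.
Local Open Scope ring_scope.
Set Implicit Arguments. Unset Strict Implicit. Unset Printing Implicit Defensive.

(* By a Neyman-Pearson argument every access
   policy is dominated by the threshold policy with the same access probability: its
   own success probability is at least as large, and the collision probability it
   inflicts on the other sensors is the same.  Such a threshold exists because access
   is continuous, q being strictly increasing and the channel laws non-atomic.
   Raising thresholds only lowers the collisions suffered by the other sensors, so by
   left-continuity of access the componentwise supremum tau of all feasible threshold
   vectors is again feasible; it has the smallest access probabilities, hence the
   smallest power cost, and it is the threshold policy of the diagonal multiplier
   nu_ii = p_i / tau_i. *)

Section ThresholdPolicy.
Context {R : realType} (P : probability R R) (q : R -> R).
Local Notation D := (@Rplus R).

Lemma measurable_Rplus : measurable D.
Proof. exact: measurable_itv. Qed.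

Lemma Rplus0 : D 0.
Proof. by rewrite /Rplus /= in_itv /= lexx. Qed.

Hypothesis PD : P D = 1%E.

Lemma integrable_bounded (f : R -> R) (M : R) : measurable_fun D f ->
  (forall x, D x -> `|f x| <= M) -> P.-integrable D (EFin \o f).
Proof.
move=> mf fM; apply/integrableP; split; first exact/measurable_EFinP.
have M0 : 0 <= M by apply: le_trans (fM _ Rplus0).
apply: (@le_lt_trans _ _ (M%:E * P D)%E); last by rewrite PD mule1 ltry.
apply: integral_le_bound => //; first exact: measurable_Rplus.
  exact/measurable_EFinP.
by apply: aeW => x Dx; rewrite /= lee_fin fM.
Qed.

Lemma integrable_unit (f : R -> R) : measurable_fun D f ->
  (forall x, D x -> -1 <= f x <= 1) -> P.-integrable D (EFin \o f).
Proof.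
by move=> mf f1; apply: (@integrable_bounded f 1) mf _ => x /f1; rewrite ler_norml.
Qed.

Hypothesis mq : measurable_fun D q.
Hypothesis q01 : forall h, D h -> 0 <= q h <= 1.

Definition threshold (t h : R) : R := if t <= q h then 1 else 0.

Definition upper_set (t : R) : set R := D `&` [set h | t <= q h].

Definition access (t : R) : R := fine (P (upper_set t)).

Definition throughput (t : R) : R := expect P (fun h => threshold t h * q h).

Lemma threshold01 t h : 0 <= threshold t h <= 1.
Proof. by rewrite /threshold; case: ifP; rewrite ?lexx ?ler01. Qed.

Lemma measurable_upper_set t : measurable (upper_set t).
Proof.
have -> : upper_set t = D `&` q @^-1` `[t, +oo[.
  by apply/seteqP; split => x [Dx]; rewrite /= in_itv /= andbT.
by apply: mq; [exact: measurable_Rplus|exact: measurable_itv].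
Qed.

Lemma measurable_threshold t : measurable_fun D (threshold t).
Proof.
have -> : threshold t = \1_(`[t, +oo[ : set R) \o q.
  apply/funext => x; rewrite /threshold /= indicE.
  by case: ifP => tq; [rewrite mem_set|rewrite memNset]; rewrite //= in_itv /= ?tq.
by apply: measurableT_comp mq; exact: measurable_indic.
Qed.

Lemma upper_setE t : P (upper_set t) = (access t)%:E.
Proof. by rewrite /access fineK// fin_num_measure//; exact: measurable_upper_set. Qed.

Lemma access_ge0 t : 0 <= access t.
Proof. by rewrite -lee_fin -upper_setE. Qed.

Lemma access_le1 t : access t <= 1.
Proof. by rewrite -lee_fin -upper_setE probability_le1//; exact: measurable_upper_set. Qed.

Lemma access_nonincr s t : s <= t -> access t <= access s.
Proof.
move=> st; rewrite -lee_fin -!upper_setE le_measure ?inE //; try exact: measurable_upper_set.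
by move=> x [Dx /= tq]; split => //; exact: le_trans tq.
Qed.

Lemma access_le0 t : t <= 0 -> access t = 1.
Proof.
move=> t0; suff : P (upper_set t) = 1%E by rewrite upper_setE => -[].
rewrite -PD; congr (P _); apply/seteqP; split => x; first by case.
by move=> Dx; split => //=; apply: le_trans t0 _; case/andP: (q01 Dx).
Qed.

Lemma access_gt1 t : 1 < t -> access t = 0.
Proof.
move=> t1; rewrite /access (_ : upper_set t = set0) ?measure0 //.
apply/seteqP; split => // x [Dx /= tq].
by case/andP: (q01 Dx) => _ /(le_trans tq); rewrite leNgt t1.
Qed.

Lemma expect_threshold t : expect P (threshold t) = access t.
Proof.
rewrite /expect /Rintegral /access -(@setIidl _ (upper_set t) D); last by move=> x [].
rewrite -integral_indic; [|exact: measurable_Rplus|exact: measurable_upper_set].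
congr fine; apply: eq_integral => x /set_mem Dx; rewrite indicE /threshold.
by case: ifP => tq; [rewrite mem_set|rewrite memNset] => // -[_ /=]; rewrite tq.
Qed.

Lemma inv_succ_nonincr (n k : nat) : (n <= k)%N -> k.+1%:R^-1 <= n.+1%:R^-1 :> R.
Proof. by move=> nk; rewrite lef_pV2 ?posrE// ler_nat ltnS. Qed.

Lemma access_left_cont t e : 0 < e -> exists2 d, 0 < d & access (t - d) <= access t + e.
Proof.
move=> e0; have [//|far] := pselect (exists2 d, 0 < d & access (t - d) <= access t + e).
have {}far d : 0 < d -> access t + e < access (t - d).
  by move=> d0; rewrite ltNge; apply/negP => ?; apply: far; exists d.
pose F n := upper_set (t - n.+1%:R^-1).
have FE : \bigcap_n F n = upper_set t.
  apply/seteqP; split => x.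
    move=> Fx; have [Dx _] := Fx 0%N I; split => //=.
    rewrite leNgt; apply/negP => /ltr_add_invr [k] qk.
    by have [_ /=] := Fx k I; apply/negP; rewrite -ltNge ltrBrDr.
  move=> [Dx /= tq] n _; split => //=; apply: le_trans tq.
  by rewrite lerBlDr lerDl invr_ge0.
have Fdec : nonincreasing_seq F.
  move=> n k nk; apply/subsetPset => x [Dx /= tq]; split => //=.
  by apply: le_trans tq; rewrite lerB // inv_succ_nonincr.
have PF0 : (P (F 0%N) < +oo)%E by rewrite /F upper_setE ltry.
have mFI : measurable (\bigcap_n F n) by rewrite FE; exact: measurable_upper_set.
have cv := nonincreasing_cvg_mu PF0 (fun=> measurable_upper_set _) mFI Fdec.
have : ((access t + e)%:E <= P (upper_set t))%E.
  rewrite -FE -(cvg_lim _ cv) //; apply: lime_ge; first exact: cvgP cv.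
  apply: nearW => n /=; rewrite /F upper_setE lee_fin; apply/ltW/far.
  by rewrite invr_gt0.
by rewrite upper_setE lee_fin; lra.
Qed.

Hypothesis qinc : {in D &, forall x y, x < y -> q x < q y}.
Hypothesis P_nonatomic : forall x : R, P [set x] = 0%E.

Lemma measurable_strict_upper_set t : measurable (D `&` [set h | t < q h]).
Proof.
have -> : D `&` [set h | t < q h] = D `&` q @^-1` `]t, +oo[.
  by apply/seteqP; split => x [Dx]; rewrite /= in_itv /= andbT.
by apply: mq; [exact: measurable_Rplus|exact: measurable_itv].
Qed.

(* q is injective on D, so the level set q = t is at most a point, which P does not charge. *)
Lemma upper_set_le_strict t : (P (upper_set t) <= P (D `&` [set h | (t < q h)%R]))%E.
Proof.
have mS := measurable_strict_upper_set t.
have [[h0 [Dh0 qh0]]|nolevel] := pselect (exists h0, D h0 /\ q h0 = t); last first.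
  rewrite le_measure ?inE //; first exact: measurable_upper_set.
  move=> x [Dx /= tq]; split => //=; rewrite lt_neqAle tq andbT.
  by apply/eqP => qx; apply: nolevel; exists x.
apply: (@le_trans _ _ (P ((D `&` [set h | t < q h]) `|` [set h0]))).
  rewrite le_measure ?inE //; [exact: measurable_upper_set|exact: measurableU|].
  move=> x [Dx /= tq]; have [tx|] := ltP t (q x); first by left.
  move=> xt; right; apply/eqP; rewrite -[_ == _]negbK; apply/negP => xh0.
  have qx : q x = q h0 by rewrite qh0; apply/eqP; rewrite eq_le tq xt.
  have [xh|hx|xh] := ltgtP x h0; last by rewrite xh eqxx in xh0.
    by move: (qinc (mem_set Dx) (mem_set Dh0) xh); rewrite qx ltxx.
  by move: (qinc (mem_set Dh0) (mem_set Dx) hx); rewrite qx ltxx.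
apply: le_trans (measureU2 _ mS _) _ => //.
rewrite -[leRHS]adde0 leeD2l //.
by have /eqP := P_nonatomic h0; rewrite eq_le => /andP[].
Qed.

Lemma access_right_cont t e : 0 < e -> exists2 d, 0 < d & access t <= access (t + d) + e.
Proof.
move=> e0; have [//|far] := pselect (exists2 d, 0 < d & access t <= access (t + d) + e).
have {}far d : 0 < d -> access (t + d) + e < access t.
  by move=> d0; rewrite ltNge; apply/negP => ?; apply: far; exists d.
pose F n := upper_set (t + n.+1%:R^-1).
have FE : \bigcup_n F n = D `&` [set h | t < q h].
  apply/seteqP; split => x.
    move=> [n _ [Dx /= tq]]; split => //=; apply: lt_le_trans tq.
    by rewrite ltrDl invr_gt0.
  move=> [Dx /= tq]; have [k kq] := ltr_add_invr tq.
  by exists k => //; split => //=; apply: ltW.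
have Finc : nondecreasing_seq F.
  move=> n k nk; apply/subsetPset => x [Dx /= tq]; split => //=.
  by apply: le_trans tq; rewrite lerD2l inv_succ_nonincr.
have mFU : measurable (\bigcup_n F n) by rewrite FE; exact: measurable_strict_upper_set.
have cv := @nondecreasing_cvg_mu _ _ _ P _ (fun=> measurable_upper_set _) mFU Finc.
have : (P (\bigcup_n F n) <= (access t - e)%:E)%E.
  rewrite -(cvg_lim _ cv) //; apply: lime_le; first exact: cvgP cv.
  apply: nearW => n /=; rewrite /F upper_setE lee_fin.
  by have := far n.+1%:R^-1; rewrite invr_gt0 ltr0Sn => /(_ isT); lra.
by rewrite FE => /(le_trans (upper_set_le_strict t)); rewrite upper_setE lee_fin; lra.
Qed.

Lemma access_onto v : 0 < v <= 1 -> exists2 s, 0 <= s & access s = v.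
Proof.
case/andP=> v0 v1; pose G := [set t | 0 <= t /\ v <= access t].
have G0 : G 0 by split; rewrite ?access_le0.
have Gub : ubound G 1.
  move=> t [_ vt]; rewrite leNgt; apply/negP => /access_gt1 t0.
  by move: vt; rewrite t0 leNgt v0.
have supG : has_sup G by split; [exists 0|exists 1].
exists (sup G); first exact: sup_upper_bound.
apply/eqP; rewrite eq_le; apply/andP; split.
  apply/ler_addgt0Pr => e e0; have [d d0 hd] := access_right_cont (sup G) e0.
  apply: le_trans hd _; rewrite lerD2r leNgt; apply/negP => vd.
  have : G (sup G + d).
    by split; [apply: addr_ge0; [exact: sup_upper_bound|exact: ltW]|exact: ltW].
  by move/(sup_upper_bound supG); rewrite leNgt ltrDl d0.
apply/ler_addgt0Pr => e e0; have [d d0 hd] := access_left_cont (sup G) e0.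
have [g [_ vg] dg] := sup_adherent d0 supG.
by apply: le_trans hd; apply: le_trans vg _; apply/access_nonincr/ltW.
Qed.

Section Policy.
Variable a : R -> R.
Hypothesis ma : measurable_fun D a.
Hypothesis a01 : forall h, D h -> 0 <= a h <= 1.

Let integrable_policy : P.-integrable D (EFin \o a).
Proof. by apply: integrable_unit => // x /a01 /andP[? ?]; apply/andP; split; lra. Qed.

Let integrable_policy_q : P.-integrable D (EFin \o (fun h => a h * q h)).
Proof.
apply: integrable_unit; first exact: measurable_funM.
by move=> x Dx; move: (a01 Dx) (q01 Dx) => /andP[? ?] /andP[? ?]; apply/andP; split; nra.
Qed.

Lemma expect_policy01 : 0 <= expect P a <= 1.
Proof.
apply/andP; split; first by apply: Rintegral_ge0 => x /a01 /andP[].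
have -> : 1 = expect P (fun=> 1).
  by rewrite /expect (@Rintegral_cst _ _ _ P D measurable_Rplus) mul1r (congr1 fine PD).
apply: le_Rintegral => //; first exact: measurable_Rplus.
  by apply: integrable_unit => // x _; rewrite lexx andbT; lra.
by move=> x /a01 /andP[].
Qed.

Lemma expect_policy_q_le : expect P (fun h => a h * q h) <= expect P a.
Proof.
apply: le_Rintegral => //; first exact: measurable_Rplus.
by move=> x Dx; move: (a01 Dx) (q01 Dx) => /andP[? ?] /andP[? ?]; nra.
Qed.

(* Integrate the pointwise inequality (threshold t h - a h) (q h - t) >= 0. *)
Lemma neyman_pearson t :
  t * (access t - expect P a) <= throughput t - expect P (fun h => a h * q h).
Proof.
have mD := measurable_Rplus; have mT := measurable_threshold t.
have Ta x : D x -> -1 <= threshold t x - a x <= 1.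
  by move=> Dx; move: (threshold01 t x) (a01 Dx) => /andP[? ?] /andP[? ?]; apply/andP; split; lra.
have intT : P.-integrable D (EFin \o threshold t).
  apply: integrable_unit => // x _; case/andP: (threshold01 t x) => ? ?.
  by apply/andP; split; lra.
have intTq : P.-integrable D (EFin \o (fun h => threshold t h * q h)).
  apply: integrable_unit; first exact: measurable_funM.
  move=> x Dx; move: (threshold01 t x) (q01 Dx) => /andP[? ?] /andP[? ?].
  by apply/andP; split; nra.
have intTa : P.-integrable D (EFin \o (fun h => threshold t h - a h)).
  by apply: integrable_unit => //; exact: measurable_funB.
have : expect P (fun h => t * (threshold t h - a h)) <=
       expect P (fun h => threshold t h * q h - a h * q h).
  apply: le_Rintegral => //.
  - apply: (@integrable_bounded _ `|t|); first exact/measurable_funM/measurable_funB.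
    by move=> x Dx; rewrite normrM ler_piMr // ler_norml Ta.
  - apply: (@integrable_bounded _ 1); first by apply/measurable_funB; exact: measurable_funM.
    move=> x Dx; rewrite ler_norml.
    move: (threshold01 t x) (a01 Dx) (q01 Dx) => /andP[? ?] /andP[? ?] /andP[? ?].
    by apply/andP; split; nra.
  - move=> x Dx; move: (a01 Dx) (q01 Dx) => /andP[? ?] /andP[? ?].
    by rewrite /threshold; case: ifP => tq; nra.
rewrite /expect RintegralZl // !RintegralB // -/(expect P (threshold t)) expect_threshold.
by rewrite -/(throughput t).
Qed.

End Policy.

Lemma throughput_ge0 t : 0 <= throughput t.
Proof.
apply: Rintegral_ge0 => x Dx.
by apply: mulr_ge0; [case/andP: (threshold01 t x)|case/andP: (q01 Dx)].
Qed.

Lemma throughput_gt1 t : 1 < t -> throughput t = 0.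
Proof.
move=> t1; apply/eqP; rewrite eq_le throughput_ge0 andbT -(access_gt1 t1).
rewrite -expect_threshold; apply: expect_policy_q_le; first exact: measurable_threshold.
by move=> h _; exact: threshold01.
Qed.

Lemma throughput_raise s t : throughput s - t * (access s - access t) <= throughput t.
Proof.
have := @neyman_pearson (threshold s) (measurable_threshold s) (fun h _ => threshold01 s h) t.
by rewrite expect_threshold -/(throughput s); lra.
Qed.

End ThresholdPolicy.

Lemma finite_pos_lb (R : realDomainType) (m : nat) (f : 'I_m -> R) :
  (forall i, 0 < f i) -> exists2 e, 0 < e & forall i, e <= f i.
Proof.
move=> f0; exists (\big[Num.min/1]_(i < m) f i).
  by apply: (big_ind (fun x => 0 < x)) => // x y x0 y0; rewrite lt_min x0 y0.
by move=> i; rewrite (bigD1 i) //= ge_min lexx.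
Qed.

Section RandomAccess.
Context {R : realType} {m : nat} (phi : 'I_m -> probability R R) (q : R -> R)
  (qc : 'I_m -> 'I_m -> R) (c : 'I_m -> R).
Local Notation D := (@Rplus R).
Local Notation acc i := (access (phi i) q).
Local Notation thr i := (throughput (phi i) q).

Hypothesis phiD : forall i, phi i D = 1%E.
Hypothesis mq : measurable_fun D q.
Hypothesis q01 : forall h, D h -> 0 <= q h <= 1.
Hypothesis qinc : {in D &, forall x y, x < y -> q x < q y}.
Hypothesis phi_nonatomic : forall i (x : R), phi i [set x] = 0%E.
Hypothesis qc01 : forall i j, j != i -> 0 <= qc j i <= 1.
Hypothesis c_gt0 : forall i, 0 < c i.

Definition no_collision (x : 'I_m -> R) (i : 'I_m) : R :=
  \prod_(j < m | j != i) (1 - x j * qc j i).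

Lemma no_collision01 x i : (forall j, 0 <= x j <= 1) -> 0 <= no_collision x i <= 1.
Proof.
move=> x01; have term01 j : j != i -> 0 <= 1 - x j * qc j i <= 1.
  move=> ji; move: (qc01 ji) (x01 j) => /andP[? ?] /andP[? ?].
  rewrite subr_ge0 mulr_ile1 //= lerBlDr lerDl; exact: mulr_ge0.
by apply/andP; split; [apply: prodr_ge0 => j /term01 /andP[]|exact: prodr_ile1].
Qed.

Lemma no_collision_le x y i : (forall j, 0 <= x j <= y j) -> (forall j, y j <= 1) ->
  no_collision y i <= no_collision x i.
Proof.
move=> xy y1; apply: ler_prod => j ji.
by move: (qc01 ji) (xy j) (y1 j) => /andP[? ?] /andP[? ?] ?; apply/andP; split; nra.
Qed.

Definition threshold_rate (t : 'I_m -> R) (i : 'I_m) : R :=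
  thr i (t i) * no_collision (fun j => acc j (t j)) i.

Definition feasible_thresholds : set ('I_m -> R) :=
  [set t | (forall i, 0 <= t i) /\ forall i, c i <= threshold_rate t i].

Lemma success_rate_threshold t i :
  success_rate phi q qc (fun j => threshold q (t j)) i = threshold_rate t i.
Proof.
by congr (_ * _); apply: eq_bigr => j _; rewrite expect_threshold.
Qed.

Lemma threshold_dominates a : feasibleP phi q qc c a ->
  exists s, [/\ feasible_thresholds s, forall i, acc i (s i) = expect (phi i) (a i)
    & forall i, success_rate phi q qc a i <= threshold_rate s i].
Proof.
move=> [pol feas].
have Ea01 i : 0 <= expect (phi i) (a i) <= 1.
  by case: (pol i) => ma a01; exact: expect_policy01.
have Ea_gt0 i : 0 < expect (phi i) (a i).
  case: (pol i) => ma a01; move: (feas i) (c_gt0 i); rewrite /success_rate.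
  have /andP[nc0 _] := no_collision01 i Ea01.
  have := expect_policy_q_le (phiD i) mq q01 ma a01; rewrite /no_collision in nc0.
  by case/andP: (Ea01 i) => ? ? ? ? ?; nra.
have /choice [s hs] i : exists s, 0 <= s /\ acc i s = expect (phi i) (a i).
  have Ea_in : 0 < expect (phi i) (a i) <= 1 by rewrite Ea_gt0; case/andP: (Ea01 i).
  by have [s s0 accs] := access_onto (phiD i) mq q01 qinc (phi_nonatomic i) Ea_in; exists s.
have rate_le i : success_rate phi q qc a i <= threshold_rate s i.
  rewrite /threshold_rate /success_rate.
  have -> : no_collision (fun j => acc j (s j)) i =
      \prod_(j < m | j != i) (1 - expect (phi j) (a j) * qc j i).
    by apply: eq_bigr => j _; rewrite (hs j).2.
  case: (pol i) => ma a01; have := neyman_pearson (phiD i) mq q01 ma a01 (s i).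
  rewrite (hs i).2 subrr mulr0 subr_ge0 => Eaq_le.
  by apply: ler_wpM2r => //; case/andP: (no_collision01 i Ea01).
exists s; split => // [|i]; last by case: (hs i).
by split => i; [case: (hs i)|exact: le_trans (feas i) (rate_le i)].
Qed.

Lemma feasible_thresholds_le1 t : feasible_thresholds t -> forall i, t i <= 1.
Proof.
move=> [_ ct] i; rewrite leNgt; apply/negP => /(throughput_gt1 (phiD i) mq q01) thr0.
by move: (ct i); rewrite /threshold_rate thr0 mul0r leNgt c_gt0.
Qed.

Lemma threshold_rate_raise s t i e : 0 <= e -> (forall j, s j <= t j) ->
  thr i (s i) - e <= thr i (t i) -> threshold_rate s i - e <= threshold_rate t i.
Proof.
move=> e0 st thr_le; rewrite /threshold_rate.
have /andP[ns0 ns1] : 0 <= no_collision (fun j => acc j (s j)) i <= 1.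
  by apply: no_collision01 => j; rewrite access_ge0 ?access_le1.
have ns_le : no_collision (fun j => acc j (s j)) i <= no_collision (fun j => acc j (t j)) i.
  apply: no_collision_le => j; last exact: access_le1.
  by rewrite access_ge0 //=; exact: access_nonincr.
have := throughput_ge0 (phi i) q01 (t i); nra.
Qed.

(* Positive thresholds are what make the multipliers p_i / tau_i well defined. *)
Lemma feasible_thresholds_pos : (exists a, strictly_feasibleP phi q qc c a) ->
  exists2 t, feasible_thresholds t & forall i, 0 < t i.
Proof.
move=> [a [pol strict]].
have [s [[s0 _] _ rate_s]] := threshold_dominates (conj pol (fun i => ltW (strict i))).
have [e e0 margin] : exists2 e, 0 < e & forall i, e <= threshold_rate s i - c i.
  by apply: finite_pos_lb => i; rewrite subr_gt0; exact: lt_le_trans (strict i) (rate_s i).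
pose t i : R := Num.max (s i) e.
exists t; last by move=> i; rewrite lt_max e0 orbT.
split=> i; first by rewrite le_max s0.
suff : threshold_rate s i - e <= threshold_rate t i by have := margin i; lra.
apply: threshold_rate_raise => [|j|]; [exact: ltW|by rewrite le_max lexx|].
have := throughput_raise (phiD i) mq q01 (s i) (t i).
rewrite /t; have [_|_] := leP e (s i); first by rewrite subrr mulr0; lra.
by have := access_le1 (phi i) mq (s i); have := access_ge0 (phi i) mq e; nra.
Qed.

Section SupremumThreshold.
Hypothesis strictly_feasible : exists a, strictly_feasibleP phi q qc c a.

Definition sup_threshold (i : 'I_m) : R := sup [set t i | t in feasible_thresholds].

Lemma has_sup_thresholds i : has_sup [set t i | t in feasible_thresholds].
Proof.
have [t Ft _] := feasible_thresholds_pos strictly_feasible.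
split; first by exists (t i), t.
by exists 1 => _ [u Fu <-]; exact: feasible_thresholds_le1.
Qed.

Lemma sup_threshold_ub t : feasible_thresholds t -> forall i, t i <= sup_threshold i.
Proof. by move=> Ft i; apply: sup_upper_bound (has_sup_thresholds i) _ _; exists t. Qed.

Lemma sup_threshold_gt0 i : 0 < sup_threshold i.
Proof.
have [t Ft t0] := feasible_thresholds_pos strictly_feasible.
exact: lt_le_trans (t0 i) (sup_threshold_ub Ft i).
Qed.

Lemma sup_threshold_le1 i : sup_threshold i <= 1.
Proof.
apply: ge_sup; first by case: (has_sup_thresholds i).
by move=> _ [t Ft <-]; exact: feasible_thresholds_le1.
Qed.

Lemma feasible_sup_threshold : feasible_thresholds sup_threshold.
Proof.
split=> i; first exact/ltW/sup_threshold_gt0.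
apply/ler_addgt0Pr => e e0.
have [d d0 acc_d] := access_left_cont (phi i) mq (sup_threshold i) e0.
have [_ [t Ft <-] near_t] := sup_adherent d0 (has_sup_thresholds i).
have acc_t : acc i (t i) <= acc i (sup_threshold i) + e.
  by apply: le_trans acc_d; apply/access_nonincr/ltW.
suff : threshold_rate t i - e <= threshold_rate sup_threshold i by have := Ft.2 i; lra.
apply: threshold_rate_raise (ltW e0) (sup_threshold_ub Ft) _.
have := throughput_raise (phiD i) mq q01 (t i) (sup_threshold i).
have := access_nonincr (phi i) mq (sup_threshold_ub Ft i).
by have := sup_threshold_gt0 i; have := sup_threshold_le1 i; nra.
Qed.

Lemma sup_threshold_access_le b : feasibleP phi q qc c b ->
  forall i, acc i (sup_threshold i) <= expect (phi i) (b i).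
Proof.
move=> fb i; have [s [Fs accs _]] := threshold_dominates fb.
by rewrite -accs; apply/access_nonincr/sup_threshold_ub.
Qed.

End SupremumThreshold.
End RandomAccess.

Lemma threshold_policy_diag (R : realType) (m : nat) (q : R -> R) (qc : 'I_m -> 'I_m -> R)
    (p tau : 'I_m -> R) : (forall i, 0 < p i) -> (forall i, 0 < tau i) ->
  threshold_policy q qc p (\matrix_(i, j) (if i == j then p i / tau i else 0)) =
  fun i => threshold q (tau i).
Proof.
move=> p0 tau0; apply/funext => i; apply/funext => h.
rewrite /threshold_policy /threshold big1 ?addr0 => [|j ji]; last first.
  by rewrite mxE (negbTE ji) mul0r.
by rewrite mxE eqxx mulrAC ler_pdivlMr // ler_pM2l.
Qed.

Theorem theorem1 (R : realType) (m : nat) (phi : 'I_m -> probability R R)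
  (q : R -> R) (qc : 'I_m -> 'I_m -> R) (p c : 'I_m -> R)
  (beta_min beta_max : R) :
  (0 < m)%N ->
  (forall i, phi i ((@Rplus R)) = 1%E) ->
  {within (@Rplus R), continuous q} ->
  {in (@Rplus R) &, forall x y, x < y -> q x < q y} ->
  (forall h, (@Rplus R) h -> 0 <= q h <= 1) ->
  (forall i j, j != i -> 0 <= qc j i <= 1) ->
  (forall i, 0 < p i) ->
  (forall i, 0 < c i <= 1) ->
  (forall i (x : R), phi i [set x] = 0%E) ->
  (exists alpha', strictly_feasibleP phi q qc c alpha') ->
  0 < beta_min -> beta_min < beta_max -> beta_max < 1 ->
  (forall alpha, feasibleP phi q qc c alpha ->
     forall i, (beta_min <= expect (phi i) (fun h => alpha i h * q h) <= beta_max) /\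
       forall j, j != i -> beta_min <= expect (phi j) (alpha j) * qc j i <= beta_max) ->
  exists nu : 'M[R]_m, (forall i j, 0 <= nu i j) /\
    optimalP phi q qc p c (threshold_policy q qc p nu).
Proof.
move=> _ phiD qcont qinc q01 qc01 p_gt0 c01 natom strict _ _ _ _.
have mq := subspace_continuous_measurable_fun measurable_Rplus qcont.
have c_gt0 i : 0 < c i by case/andP: (c01 i).
pose tau := sup_threshold phi q qc c.
have tau_gt0 := sup_threshold_gt0 phiD mq q01 qinc natom qc01 c_gt0 strict.
exists (\matrix_(i, j) (if i == j then p i / tau i else 0)); split.
  by move=> i j; rewrite mxE; case: eqP => // _; apply/divr_ge0; apply/ltW.
rewrite threshold_policy_diag //; split.
  split=> i; first by split; [exact: measurable_threshold|move=> h _; exact: threshold01].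
  rewrite success_rate_threshold //.
  exact: (feasible_sup_threshold phiD mq q01 qinc natom qc01 c_gt0 strict).2.
move=> b fb; apply: ler_sum => i _; rewrite expect_threshold //.
apply: ler_wpM2l; first exact/ltW.
exact: (sup_threshold_access_le phiD mq q01 qinc natom qc01 c_gt0 strict fb).
Qed.
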